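(* (a) Let $(A,\succ_A,\prec_A)$ be an anti-pre-Leibniz algebra with sub-adjacent Leibniz algebra $(A,\circ_A)$. Then $A\oplus A^*$ with $$(x+a^* )\circ_d(y+b^* )=x\circ_A y-\mathcal L^*_{\succ_A}(x)b^*+(\mathcal L^*_{\succ_A}+\mathcal R^*_{\prec_A})(y)a^*$$ is a Leibniz algebra, and the bilinear form $\omega_p(x+a^*,y+b^* )=\langle x,b^*\rangle-\langle a^*,y\rangle$ is a nondegenerate skew-symmetric $2$-cocycle on it. (b) Conversely, let $(A,\circ_A)$ be a Leibniz algebra with a representation $(l,r,A^* )$, and consider the Leibniz algebra $A\oplus A^*$ with $(x+a^* )\circ_d(y+b^* )=x\circ_A y+l(x)b^*+r(y)a^*$. If $\omega_p$ (as in (a)) is a $2$-cocycle on this Leibniz algebra, then there is a compatible anti-pre-Leibniz algebra $(A,\succ_A,\prec_A)$ of $(A,\circ_A)$ such that $l=-\mathcal L^*_{\succ_A}$ and $r=\mathcal L^*_{\succ_A}+\mathcal R^*_{\prec_A}$.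
   Context: All vector spaces are finite-dimensional over a field $\mathbb K$ of characteristic zero. For a multiplication $\ast$, $\mathcal L_\ast(x)y=x\ast y$, $\mathcal R_\ast(x)y=y\ast x$; for $f:A\to\mathrm{End}(V)$, $f^*:A\to\mathrm{End}(V^* )$ is $\langle f^*(x)u^*,v\rangle=-\langle u^*,f(x)v\rangle$. A Leibniz algebra is a vector space $A$ with a multiplication $\circ_A$ satisfying $x\circ_A(y\circ_A z)=(x\circ_A y)\circ_A z+y\circ_A(x\circ_A z)$. A representation of $(A,\circ_A)$ is a triple $(l,r,V)$ with linear maps $l,r:A\to\mathrm{End}(V)$ such that for all $x,y\in A,v\in V$: $l(x\circ_A y)v=l(x)l(y)v-l(y)l(x)v$; $r(x\circ_A y)v=l(x)r(y)v-r(y)l(x)v$; $r(y)l(x)v=-r(y)r(x)v$ (equivalently, $x\circ_A y+l(x)v+r(y)u$ defines a Leibniz algebra on $A\oplus V$). A bilinear form $\omega$ on a Leibniz algebra $(B,\circ)$ is a $2$-cocycle if $\omega(z,x\circ y)=\omega(x,y\circ z+z\circ y)-\omega(y,x\circ z)$ for all $x,y,z\in B$. An anti-pre-Leibniz algebra is a vector space $A$ with multiplications $\succ_A,\prec_A$ such that, with $x\circ y=x\succ_A y+x\prec_A y$, for all $x,y,z$: (AL1) $(x\circ y)\prec_A z=x\succ_A(y\circ z)-y\succ_A(x\circ z)$; (AL2) $(x\circ y)\succ_A z=y\succ_A(x\succ_A z)-x\succ_A(y\succ_A z)$; (AL3) $x\prec_A(y\circ z)=(y\succ_A x)\prec_A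 z-y\succ_A(x\prec_A z)$; (AL4) $(x\succ_A y)\prec_A z=-(y\prec_A x)\prec_A z$. Its sub-adjacent Leibniz algebra is $(A,\circ_A)$ with $\circ_A=\succ_A+\prec_A$; a compatible anti-pre-Leibniz algebra of a Leibniz algebra $(A,\circ_A)$ is an anti-pre-Leibniz algebra $(A,\succ_A,\prec_A)$ with $\succ_A+\prec_A=\circ_A$. *)

From HB Require Import structures.
From mathcomp Require Import all_boot all_order all_algebra.
Set Implicit Arguments. Unset Strict Implicit. Unset Printing Implicit Defensive.
Import GRing.Theory.
Local Open Scope ring_scope.

Definition Dual (K : fieldType) (A : vectType K) := 'Hom(A, K^o).

Definition bilinear_mul (K : fieldType) (V : lmodType K) (m : V -> V -> V) :=
  (forall z (a : K) x y, m (a *: x + y) z = a *: m x z + m y z) /\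
  (forall z (a : K) x y, m z (a *: x + y) = a *: m z x + m z y).

Definition leibniz (K : fieldType) (V : lmodType K) (m : V -> V -> V) :=
  bilinear_mul m /\ forall x y z, m x (m y z) = m (m x y) z + m y (m x z).

Definition leibniz_rep (K : fieldType) (A W : vectType K) (m : A -> A -> A)
    (l r : A -> 'End(W)) :=
  (forall (a : K) x y, l (a *: x + y) = a *: l x + l y) /\
  (forall (a : K) x y, r (a *: x + y) = a *: r x + r y) /\
  (forall x y v, l (m x y) v = l x (l y v) - l y (l x v)) /\
  (forall x y v, r (m x y) v = l x (r y v) - r y (l x v)) /\
  (forall x y v, r y (l x v) = - r y (r x v)).

(* Anti-pre-Leibniz algebra (AL1)-(AL4), with bilinear operations. *)
Definition anti_pre_leibniz (K : fieldType) (A : lmodType K) (succ prec : A -> A -> A) :=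
  let c := fun x y => succ x y + prec x y in
  bilinear_mul succ /\ bilinear_mul prec /\
  (forall x y z, prec (c x y) z = succ x (c y z) - succ y (c x z)) /\
  (forall x y z, succ (c x y) z = succ y (succ x z) - succ x (succ y z)) /\
  (forall x y z, prec x (c y z) = prec (succ y x) z - succ y (prec x z)) /\
  (forall x y z, prec (succ x y) z = - prec (prec y x) z).

(* Dual actions: <f^*(x) u*, v> = - <u*, f(x) v>.
   dualL m x = (L_m)^*(x),  dualR m x = (R_m)^*(x). *)
Definition dualL (K : fieldType) (A : vectType K) (m : A -> A -> A) (x : A)
    (u : Dual A) : Dual A := linfun (fun v : A => - u (m x v)).
Definition dualR (K : fieldType) (A : vectType K) (m : A -> A -> A) (x : A)
    (u : Dual A) : Dual A := linfun (fun v : A => - u (m v x)).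

Definition sd_mul (K : fieldType) (A : vectType K) (m : A -> A -> A)
    (l r : A -> Dual A -> Dual A) (p q : A * Dual A) : A * Dual A :=
  (m p.1 q.1, l p.1 q.2 + r q.1 p.2).

Definition omega_p (K : fieldType) (A : vectType K) (p q : A * Dual A) : K :=
  q.2 p.1 - p.2 q.1.

Definition lb_bilinear_form (K : fieldType) (V : lmodType K) (w : V -> V -> K) :=
  (forall z (a : K) x y, w (a *: x + y) z = a * w x z + w y z) /\
  (forall z (a : K) x y, w z (a *: x + y) = a * w z x + w z y).

Definition lb_skew_symmetric (K : fieldType) (V : lmodType K) (w : V -> V -> K) :=
  forall x y, w x y = - w y x.

Definition lb_nondegenerate (K : fieldType) (V : lmodType K) (w : V -> V -> K) :=
  forall x, (forall y, w x y = 0) -> x = 0.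

Definition two_cocycle (K : fieldType) (V : lmodType K) (m : V -> V -> V)
    (w : V -> V -> K) :=
  forall x y z, w z (m x y) = w x (m y z + m z y) - w y (m x z).

From HB Require Import structures.
From mathcomp Require Import all_boot all_order all_algebra ring.
Import GRing.Theory.
Set Implicit Arguments. Unset Strict Implicit.
Local Open Scope ring_scope.

(* Everything is read through the pairing between A^* and A.  The dual actions
   l = -L^*_succ and r = L^*_succ + R^*_prec are characterised by
   <l(x)u, v> = <u, x succ v> and <r(y)u, v> = -<u, y succ v> - <u, v prec y>;
   under these relations the three axioms of a representation of (A, circ) on
   A^* are equivalent to (AL2), (AL3) and (AL4) respectively, and omega_p is a
   2-cocycle on the semidirect product exactly when
   <u, x circ y> = <l(x)u, y> - <(l(y) + r(y))u, x>.  Conversely, since A is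
   finite-dimensional, every representation on A^* defines succ and prec by
   these same pairings.  Finally, given (AL2)-(AL4), the Leibniz defect
   x(yz) - (xy)z - y(xz) of circ is -2 times the defect of (AL1), so (AL1) is
   equivalent to the Leibniz identity of circ as soon as 2 is invertible. *)

Section LinearFunctions.
Variables (K : fieldType) (V W : lmodType K) (f : V -> W).
Hypothesis f_linear : linear f.

Definition linear_of : {linear V -> W} :=
  HB.pack f (GRing.isLinear.Build _ _ _ _ f f_linear).

Lemma linear_fD x y : f (x + y) = f x + f y. Proof. exact: raddfD linear_of x y. Qed.
Lemma linear_fN x : f (- x) = - f x. Proof. exact: raddfN linear_of x. Qed.
Lemma linear_f0 : f 0 = 0. Proof. exact: raddf0 linear_of. Qed.

End LinearFunctions.

Lemma linfunE_linear (K : fieldType) (A B : vectType K) (f : A -> B) :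
  linear f -> linfun f =1 f.
Proof. by move=> f_linear; exact: lfunE (linear_of f_linear). Qed.

Lemma eq_from_eq_sub (V : zmodType) (a b p q : V) : p = q -> a - b = p - q -> a = b.
Proof. by move=> -> /eqP; rewrite subrr subr_eq0 => /eqP. Qed.

Lemma regular_scaleE (K : fieldType) (a b : K^o) : a *: b = a * b.
Proof. by []. Qed.

Section BilinearMul.
Variables (K : fieldType) (V : lmodType K) (m : V -> V -> V).
Hypothesis m_bilinear : bilinear_mul m.

Lemma bmulDl x y z : m (x + y) z = m x z + m y z.
Proof. exact: @linear_fD _ _ _ (m^~ z) (m_bilinear.1 z) x y. Qed.
Lemma bmulDr x y z : m z (x + y) = m z x + m z y.
Proof. exact: @linear_fD _ _ _ (m z) (m_bilinear.2 z) x y. Qed.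
Lemma bmulNl x z : m (- x) z = - m x z.
Proof. exact: @linear_fN _ _ _ (m^~ z) (m_bilinear.1 z) x. Qed.
Lemma bmulNr x z : m z (- x) = - m z x.
Proof. exact: @linear_fN _ _ _ (m z) (m_bilinear.2 z) x. Qed.

End BilinearMul.

Section DualSpace.
Variables (K : fieldType) (A : vectType K).

Definition coord_form i : Dual A := @linfun _ A K^o (coord (vbasis fullv) i).

Lemma coord_formE i v : coord_form i v = coord (vbasis fullv) i v.
Proof. exact: lfunE. Qed.

Lemma dual_coord_expansion (u : Dual A) :
  u = \sum_(i < \dim (fullv : {vspace A})) u (vbasis fullv)`_i *: coord_form i.
Proof.
apply/lfunP=> v; rewrite sum_lfunE {1}(coord_vbasis (memvf v)) linear_sum.
by apply: eq_bigr => i _; rewrite scale_lfunE coord_formE linearZ /=; exact: mulrC.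
Qed.

Lemma pairingD (u : Dual A) v w : u (v + w) = u v + u w.
Proof. exact: linearD. Qed.

Lemma pairingZ (u : Dual A) a v : u (a *: v) = a * u v.
Proof. exact: linearZ. Qed.

Lemma pairingN (u : Dual A) v : u (- v) = - u v.
Proof. exact: linearN. Qed.

Lemma eq_dual (v w : A) : (forall u : Dual A, u v = u w) -> v = w.
Proof.
move=> eq_vw; rewrite (coord_vbasis (memvf v)) (coord_vbasis (memvf w)).
by apply: eq_bigr => i _; rewrite -!coord_formE eq_vw.
Qed.

Definition bidual (phi : Dual A -> K) : A :=
  \sum_i phi (coord_form i) *: (vbasis (fullv : {vspace A}))`_i.

Lemma bidualE (phi : Dual A -> K^o) : linear phi -> forall u : Dual A, u (bidual phi) = phi u.
Proof.
move=> phi_linear u; rewrite [in RHS](dual_coord_expansion u).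
rewrite -[phi _]/(linear_of phi_linear _) !linear_sum.
by apply: eq_bigr => i _; rewrite !linearZ /=; exact: mulrC.
Qed.

End DualSpace.

Section DualActions.
Variables (K : fieldType) (A : vectType K) (m : A -> A -> A).
Hypothesis m_bilinear : bilinear_mul m.

Lemma dualLE x u v : dualL m x u v = - u (m x v).
Proof.
rewrite /dualL linfunE_linear // => a p q.
by rewrite m_bilinear.2 linearP /=; ring.
Qed.

Lemma dualRE x u v : dualR m x u v = - u (m v x).
Proof.
rewrite /dualR linfunE_linear // => a p q.
by rewrite m_bilinear.1 linearP /=; ring.
Qed.

End DualActions.

Section SemidirectProduct.
Variables (K : fieldType) (A : vectType K) (m : A -> A -> A)
  (l r : A -> Dual A -> Dual A).
Hypotheses (m_leibniz : leibniz m)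
  (l_linear : forall x, linear (l x)) (r_linear : forall x, linear (r x))
  (l_linear_in : forall a x y u, l (a *: x + y) u = a *: l x u + l y u)
  (r_linear_in : forall a x y u, r (a *: x + y) u = a *: r x u + r y u)
  (l_mul : forall x y u, l (m x y) u = l x (l y u) - l y (l x u))
  (r_mul : forall x y u, r (m x y) u = l x (r y u) - r y (l x u))
  (r_l : forall x y u, r y (l x u) = - r y (r x u)).

Lemma sd_mul_leibniz : leibniz (sd_mul m l r).
Proof.
have [[m_linear_l m_linear_r] m_jacobi] := m_leibniz.
have lD x u w : l x (u + w) = l x u + l x w := linear_fD (l_linear x) u w.
have rD x u w : r x (u + w) = r x u + r x w := linear_fD (r_linear x) u w.
split; [split|] => [[z c] a [x1 a1] [x2 a2]|[z c] a [x1 a1] [x2 a2]|[x a] [y b] [z c]];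
  rewrite /sd_mul /=; congr pair.
- exact: m_linear_l.
- by rewrite l_linear_in r_linear; apply/lfunP => v; rewrite !(add_lfunE, scale_lfunE); ring.
- exact: m_linear_r.
- by rewrite l_linear r_linear_in; apply/lfunP => v; rewrite !(add_lfunE, scale_lfunE); ring.
- exact: m_jacobi.
apply/lfunP => v; rewrite !lD !rD l_mul !r_mul r_l.
rewrite !(add_lfunE, opp_lfunE); ring.
Qed.

End SemidirectProduct.

Section OmegaP.
Variables (K : fieldType) (A : vectType K).

Lemma omega_p_bilinear : lb_bilinear_form (@omega_p K A).
Proof.
by split=> [[z c] a [x1 a1] [x2 a2]|[z c] a [x1 a1] [x2 a2]];
  rewrite /omega_p /= !(linearP, add_lfunE, scale_lfunE) /= !regular_scaleE; ring.
Qed.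

Lemma omega_p_skew : lb_skew_symmetric (@omega_p K A).
Proof. by move=> [x a] [y b]; rewrite /omega_p /= opprB. Qed.

Lemma omega_p_nondegenerate : lb_nondegenerate (@omega_p K A).
Proof.
move=> [x a] omega_x0; have x0 : x = 0.
  by apply: eq_dual => u; have := omega_x0 (0, u); rewrite /omega_p /= !linear0 addr0.
suff -> : a = 0 by rewrite x0.
apply/lfunP => v; have := omega_x0 (v, 0).
by rewrite /omega_p /= x0 linear0 zero_lfunE sub0r => /eqP; rewrite oppr_eq0 => /eqP.
Qed.

Variables (m : A -> A -> A) (l r : A -> Dual A -> Dual A).

Lemma omega_p_cocycleP :
  (forall x, l x 0 = 0) -> (forall y, r y 0 = 0) ->
  two_cocycle (sd_mul m l r) (@omega_p K A) <->
  (forall x y (u : Dual A), u (m x y) = l x u y - (l y u + r y u) x).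
Proof.
move=> l0 r0; split=> [cocycle x y u | pairing_mul [x a] [y b] [z c]].
  have := cocycle (x, 0) (y, 0) (0, u); rewrite /omega_p /sd_mul /= !l0 !r0.
  rewrite !(add_lfunE, zero_lfunE, linear0) => eq_u.
  by apply: (eq_from_eq_sub (esym eq_u)); ring.
rewrite /omega_p /sd_mul /= !(add_lfunE, linearD) /= !pairing_mul !add_lfunE; ring.
Qed.

End OmegaP.

Section AntiPreLeibniz.
Variables (K : fieldType) (A : vectType K) (succ prec : A -> A -> A).
Hypotheses (succ_bilinear : bilinear_mul succ) (prec_bilinear : bilinear_mul prec).

Local Notation circ x y := (succ x y + prec x y).

Ltac expand_products :=
  rewrite ?(bmulDl succ_bilinear, bmulDr succ_bilinear, bmulNl succ_bilinear,
            bmulNr succ_bilinear, bmulDl prec_bilinear, bmulDr prec_bilinear,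
            bmulNl prec_bilinear, bmulNr prec_bilinear).

Lemma circ_bilinear : bilinear_mul (fun x y => circ x y).
Proof.
by split=> z a x y; rewrite ?succ_bilinear.1 ?prec_bilinear.1 ?succ_bilinear.2
  ?prec_bilinear.2 scalerDr addrACA.
Qed.

Section LeibnizDefect.
Hypotheses
  (succ_circ_l : forall x y z, succ (circ x y) z = succ y (succ x z) - succ x (succ y z))
  (prec_circ_r : forall x y z, prec x (circ y z) = prec (succ y x) z - succ y (prec x z))
  (prec_succ_l : forall x y z, prec (succ x y) z = - prec (prec y x) z).

Lemma leibniz_defectE x y z :
  circ x (circ y z) - (circ (circ x y) z + circ y (circ x z)) =
  (succ x (circ y z) - succ y (circ x z) - prec (circ x y) z) *+ 2.
Proof.
apply: eq_dual => u; rewrite linearMn /= !prec_circ_r succ_circ_l.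
by expand_products; rewrite !prec_succ_l !(pairingD, pairingN); ring.
Qed.

Lemma circ_leibniz
    (prec_circ_l : forall x y z, prec (circ x y) z = succ x (circ y z) - succ y (circ x z)) :
  leibniz (fun x y => circ x y).
Proof.
split=> [|x y z /=]; first exact: circ_bilinear.
by apply/eqP; rewrite -subr_eq0 leibniz_defectE prec_circ_l subrr mul0rn.
Qed.

Lemma prec_circ_l_of_leibniz : (2%:R : K) != 0 -> leibniz (fun x y => circ x y) ->
  forall x y z, prec (circ x y) z = succ x (circ y z) - succ y (circ x z).
Proof.
move=> two_neq0 [_ circ_jacobi] x y z; apply/esym/subr0_eq/eqP.
move/eqP: (circ_jacobi x y z); rewrite /= -subr_eq0 leibniz_defectE.
by rewrite -scaler_nat scaler_eq0 (negbTE two_neq0).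
Qed.

End LeibnizDefect.

Lemma opp_dualL_pairing x u v : (- dualL succ x u) v = u (succ x v).
Proof. by rewrite opp_lfunE dualLE ?opprK. Qed.

Lemma dualLR_pairing y u v :
  (dualL succ y u + dualR prec y u) v = - u (succ y v) - u (prec v y).
Proof. by rewrite add_lfunE dualLE ?dualRE. Qed.

Section DualRepresentation.
Variables (l r : A -> Dual A -> Dual A).
Hypotheses (l_pairing : forall x u v, l x u v = u (succ x v))
  (r_pairing : forall y u v, r y u v = - u (succ y v) - u (prec v y)).

Ltac expand_pairings :=
  rewrite ?(add_lfunE, opp_lfunE, scale_lfunE, l_pairing, r_pairing);
  expand_products; rewrite ?(pairingD, pairingN, pairingZ, regular_scaleE).

Lemma dual_l_linear x : linear (l x).
Proof. by move=> a u w; apply/lfunP => v; expand_pairings. Qed.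

Lemma dual_r_linear y : linear (r y).
Proof. by move=> a u w; apply/lfunP => v; expand_pairings; ring. Qed.

Lemma dual_l_linear_in a x y u : l (a *: x + y) u = a *: l x u + l y u.
Proof. by apply/lfunP => v; rewrite l_pairing succ_bilinear.1; expand_pairings. Qed.

Lemma dual_r_linear_in a x y u : r (a *: x + y) u = a *: r x u + r y u.
Proof.
apply/lfunP => v; rewrite r_pairing succ_bilinear.1 prec_bilinear.2.
by expand_pairings; ring.
Qed.

Lemma dual_rep_l_mulP :
  (forall x y u, l (circ x y) u = l x (l y u) - l y (l x u)) <->
  (forall x y z, succ (circ x y) z = succ y (succ x z) - succ x (succ y z)).
Proof.
split=> l_mul x y => [z|u].
  by apply: eq_dual => u; rewrite -l_pairing l_mul; expand_pairings.
by apply/lfunP => v; rewrite l_pairing l_mul; expand_pairings.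
Qed.

Lemma dual_rep_r_mulP :
  (forall x y z, succ (circ x y) z = succ y (succ x z) - succ x (succ y z)) ->
  (forall x y u, r (circ x y) u = l x (r y u) - r y (l x u)) <->
  (forall x y z, prec x (circ y z) = prec (succ y x) z - succ y (prec x z)).
Proof.
move=> succ_circ_l; split=> r_mul x y => [z|u].
  apply: eq_dual => u.
  have := congr1 (fun w : Dual A => w x) (r_mul y z u).
  rewrite /= r_pairing succ_circ_l; expand_pairings => E.
  by apply: (eq_from_eq_sub (esym E)); ring.
apply/lfunP => v; rewrite r_pairing succ_circ_l r_mul.
by expand_pairings; ring.
Qed.

Lemma dual_rep_r_lP :
  (forall x y u, r y (l x u) = - r y (r x u)) <->
  (forall x y z, prec (succ x y) z = - prec (prec y x) z).
Proof.
split=> r_l x y => [z|u].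
  apply: eq_dual => u.
  have := congr1 (fun w : Dual A => w y) (r_l z x u).
  expand_pairings => E.
  by apply: (eq_from_eq_sub E); ring.
apply/lfunP => v; expand_pairings; rewrite r_l.
by expand_pairings; ring.
Qed.

Lemma dual_rep_sd_mul_leibniz :
  anti_pre_leibniz succ prec -> leibniz (sd_mul (fun x y => circ x y) l r).
Proof.
case=> _ [_ [prec_circ_l [succ_circ_l [prec_circ_r prec_succ_l]]]].
apply: sd_mul_leibniz.
- exact: circ_leibniz.
- exact: dual_l_linear.
- exact: dual_r_linear.
- exact: dual_l_linear_in.
- exact: dual_r_linear_in.
- exact/dual_rep_l_mulP.
- exact/dual_rep_r_mulP.
- exact/dual_rep_r_lP.
Qed.

Lemma dual_rep_omega_p_cocycle :
  two_cocycle (sd_mul (fun x y => circ x y) l r) (@omega_p K A).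
Proof.
apply/omega_p_cocycleP => [x|y|x y u].
- exact: linear_f0 (dual_l_linear x).
- exact: linear_f0 (dual_r_linear y).
- by expand_pairings; ring.
Qed.

Lemma anti_pre_leibniz_of_dual_rep : (2%:R : K) != 0 ->
  leibniz (fun x y => circ x y) ->
  (forall x y u, l (circ x y) u = l x (l y u) - l y (l x u)) ->
  (forall x y u, r (circ x y) u = l x (r y u) - r y (l x u)) ->
  (forall x y u, r y (l x u) = - r y (r x u)) ->
  anti_pre_leibniz succ prec.
Proof.
move=> two_neq0 leibniz_circ l_mul r_mul r_l.
have succ_circ_l := dual_rep_l_mulP.1 l_mul.
have prec_circ_r := (dual_rep_r_mulP succ_circ_l).1 r_mul.
have prec_succ_l := dual_rep_r_lP.1 r_l.
do 2!split=> //; split; last by [].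
exact: (prec_circ_l_of_leibniz succ_circ_l prec_circ_r prec_succ_l two_neq0 leibniz_circ).
Qed.

End DualRepresentation.
End AntiPreLeibniz.

Section DualRepresentationToAntiPreLeibniz.
Variables (K : fieldType) (A : vectType K) (circ : A -> A -> A) (l r : A -> 'End(Dual A)).

Definition rep_succ x v : A := bidual (fun u : Dual A => l x u v).
Definition rep_prec v y : A := bidual (fun u : Dual A => - r y u v - l y u v).

Lemma rep_succ_pairing x (u : Dual A) v : u (rep_succ x v) = l x u v.
Proof.
by rewrite /rep_succ bidualE // => a p q; rewrite linearP !(add_lfunE, scale_lfunE).
Qed.

Lemma rep_prec_pairing v y (u : Dual A) : u (rep_prec v y) = - r y u v - l y u v.
Proof.
rewrite /rep_prec bidualE // => a p q.
by rewrite !linearP !(add_lfunE, scale_lfunE) !regular_scaleE; ring.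
Qed.

Hypothesis rep : leibniz_rep circ l r.

Lemma rep_succ_bilinear : bilinear_mul rep_succ.
Proof.
have [l_linear_in _] := rep.
split=> z a x y; apply: eq_dual => u; rewrite pairingD pairingZ !rep_succ_pairing.
  by rewrite l_linear_in !(add_lfunE, scale_lfunE).
by rewrite linearP.
Qed.

Lemma rep_prec_bilinear : bilinear_mul rep_prec.
Proof.
have [l_linear_in [r_linear_in _]] := rep.
split=> z a x y; apply: eq_dual => u; rewrite pairingD pairingZ !rep_prec_pairing.
  by rewrite !(pairingD, pairingZ); ring.
by rewrite l_linear_in r_linear_in !(add_lfunE, scale_lfunE) !regular_scaleE; ring.
Qed.

Lemma rep_l_pairing x (u : Dual A) v : l x u v = u (rep_succ x v).
Proof. by rewrite rep_succ_pairing. Qed.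

Lemma rep_r_pairing y (u : Dual A) v :
  r y u v = - u (rep_succ y v) - u (rep_prec v y).
Proof. by rewrite rep_succ_pairing rep_prec_pairing; ring. Qed.

Hypothesis cocycle :
  two_cocycle (sd_mul circ (fun x b => l x b) (fun y a => r y a)) (@omega_p K A).

Lemma rep_succ_prec_circ x y : rep_succ x y + rep_prec x y = circ x y.
Proof.
have l0 w : l w 0 = 0 by exact: linear0.
have r0 w : r w 0 = 0 by exact: linear0.
apply: eq_dual => u; rewrite ((omega_p_cocycleP _ l0 r0).1 cocycle x y u).
by rewrite pairingD rep_succ_pairing rep_prec_pairing add_lfunE; ring.
Qed.

Lemma rep_anti_pre_leibniz :
  (2%:R : K) != 0 -> leibniz circ -> anti_pre_leibniz rep_succ rep_prec.
Proof.
move=> two_neq0 [_ circ_jacobi].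
have [_ [_ [l_mul [r_mul r_l]]]] := rep.
apply: (anti_pre_leibniz_of_dual_rep rep_succ_bilinear rep_prec_bilinear
  rep_l_pairing rep_r_pairing two_neq0).
- split=> [|x y z /=]; first exact: circ_bilinear rep_succ_bilinear rep_prec_bilinear.
  by rewrite !rep_succ_prec_circ.
- by move=> x y u; rewrite rep_succ_prec_circ l_mul.
- by move=> x y u; rewrite rep_succ_prec_circ r_mul.
- exact: r_l.
Qed.

End DualRepresentationToAntiPreLeibniz.

Theorem proposition2p16 (K : fieldType) (hK : [pchar K] =i pred0) (A : vectType K) :
  (* (a) *)
  (forall succ prec : A -> A -> A,
     anti_pre_leibniz succ prec ->
     let circ := fun x y => succ x y + prec x y in
     let md := sd_mul circ (fun x b => - dualL succ x b)
                           (fun y a => dualL succ y a + dualR prec y a) in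
     leibniz md /\ lb_bilinear_form (@omega_p K A) /\ lb_skew_symmetric (@omega_p K A) /\
     lb_nondegenerate (@omega_p K A) /\ two_cocycle md (@omega_p K A)) /\
  (* (b) *)
  (forall (circ : A -> A -> A) (l r : A -> 'End(Dual A)),
     leibniz circ -> leibniz_rep circ l r ->
     two_cocycle (sd_mul circ (fun x b => l x b) (fun y a => r y a)) (@omega_p K A) ->
     exists succ prec : A -> A -> A,
       anti_pre_leibniz succ prec /\
       (forall x y, succ x y + prec x y = circ x y) /\
       (forall x u, l x u = - dualL succ x u) /\
       (forall x u, r x u = dualL succ x u + dualR prec x u)).
Proof.
split=> [succ prec apl circ md | circ l r circ_leibniz rep cocycle].
  have [succ_bilinear [prec_bilinear _]] := apl.
  have l_pairing := opp_dualL_pairing succ_bilinear.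
  have r_pairing := dualLR_pairing succ_bilinear prec_bilinear.
  split; first exact: dual_rep_sd_mul_leibniz l_pairing r_pairing apl.
  split; first exact: omega_p_bilinear.
  split; first exact: omega_p_skew.
  split; first exact: omega_p_nondegenerate.
  exact: dual_rep_omega_p_cocycle l_pairing r_pairing.
have two_neq0 : (2%:R : K) != 0 by rewrite (pcharf0P _).1.
have succ_bilinear := rep_succ_bilinear rep.
have prec_bilinear := rep_prec_bilinear rep.
exists (rep_succ l), (rep_prec l r).
split; first exact: rep_anti_pre_leibniz rep cocycle two_neq0 circ_leibniz.
split; first exact: rep_succ_prec_circ cocycle.
split=> x u; apply/lfunP => v.
  by rewrite opp_dualL_pairing ?rep_succ_pairing.
by rewrite dualLR_pairing // (rep_r_pairing l).
Qed.
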